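(* Let $N=((V\cup \{s\}, A),\tau)$ be an acyclic temporal network (no arc enters $s$) and let $k\in \mathbb{N}$ be such that $$\min\{k,|\rho_N^i(v)|\}\ge \min\{k,|\delta_N^i(v)|\} \quad \text{for all } i\in \mathbb{N} \text{ and all } v\in V.$$ Then there exist $k$ pairwise arc-disjoint $\tau$-respecting $s$-arborescences $T_1,\dots,T_k$ in $D=(V\cup\{s\},A)$ such that each vertex $v\in V$ belongs to exactly $\min\{k,d^-_A(v)\}$ of them.
   Context: A temporal network is a pair $N=(D,\tau)$ where $D=(V\cup\{s\},A)$ is a directed graph (parallel arcs allowed) with a root $s$ that no arc enters, and $\tau:A\to\mathbb{N}$. $N$ is acyclic if $D$ has no directed cycle. $d^-_A(v)$ is the number of arcs entering $v$. For $i\in\mathbb{N}$, $\rho_N^i(v)=\{a \text{ entering } v:\tau(a)\le i\}$ and $\delta_N^i(v)=\{a\text{ leaving } v:\tau(a)\le i\}$. An $s$-arborescence is an acyclic subgraph $F=(V'\cup\{s\},A')$ with $V'\subseteq V$ in which every vertex of $V'$ has in-degree exactly $1$ (it need not span $V$). A directed path with arcs $a_1,\dots,a_\ell$ in order is $\tau$-respecting if $\tau(a_1)\le\tau(a_2)\le\dots\le\tau(a_\ell)$; an $s$-arborescence is $\tau$-respecting if for each of its vertices $v$ the unique $(s,v)$-path in it is $\tau$-respecting. *)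

From mathcomp Require Import all_boot.
Set Implicit Arguments. Unset Strict Implicit. Unset Printing Implicit Defensive.

(* A directed multigraph on a finite vertex type W with a finite arc type Ar;
   each arc a goes from tl a to hd a.  Parallel arcs are allowed. *)
Section Digraph.
Variables (W Ar : finType) (tl hd : Ar -> W).

Fixpoint walk (x : W) (p : seq Ar) (y : W) : bool :=
  match p with
  | [::] => x == y
  | a :: p' => (tl a == x) && walk (hd a) p' y
  end.

Definition dpath (x : W) (p : seq Ar) (y : W) : bool :=
  walk x p y && uniq (x :: map hd p).

Definition has_cycle (B : {set Ar}) : Prop :=
  exists (x : W) (p : seq Ar), [/\ p != [::], all (mem B) p & walk x p x].

Definition acyclic (B : {set Ar}) : Prop := ~ has_cycle B.

Definition indeg (v : W) : nat := #|[set a | hd a == v]|.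
Definition rho (tau : Ar -> nat) (i : nat) (v : W) : {set Ar} :=
  [set a | (hd a == v) && (tau a <= i)].
Definition delta (tau : Ar -> nat) (i : nat) (v : W) : {set Ar} :=
  [set a | (tl a == v) && (tau a <= i)].

Definition s_arborescence (s : W) (Vs : {set W}) (B : {set Ar}) : Prop :=
  [/\ s \notin Vs,
      (forall a, a \in B -> (tl a \in s |: Vs) /\ (hd a \in s |: Vs)),
      acyclic B &
      (forall v, v \in Vs -> #|[set a in B | hd a == v]| = 1)].

Definition tau_respecting (tau : Ar -> nat) (p : seq Ar) : bool :=
  sorted leq (map tau p).

Definition tau_resp_arborescence (tau : Ar -> nat) (s : W)
    (Vs : {set W}) (B : {set Ar}) : Prop :=
  s_arborescence s Vs B /\
  forall v p, v \in s |: Vs -> all (mem B) p -> dpath s p v -> tau_respecting tau p.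

End Digraph.

From mathcomp Require Import all_boot zify.
Set Implicit Arguments. Unset Strict Implicit. Unset Printing Implicit Defensive.

(* Induction on the number of arcs not leaving [s].  If every arc leaves [s],
   each vertex [v] simply hands [min k (indeg v)] of its in-arcs to distinct
   arborescences.  Otherwise acyclicity yields a vertex [u <> s] with an
   out-arc, all of whose in-arcs leave [s].  Making the out-arcs of [u] leave
   [s] instead preserves the hypotheses; in a packing of the modified network,
   arborescence [j] must be given an arc [s -> u] no later than its first arc
   leaving [u].  The hypothesis at [u] says that for every [i] at most
   [min k |rho^i(u)|] arborescences have such a deadline [<= i], so handing out
   the in-arcs of [u] earliest-first to the most urgent arborescence serves
   them all and puts [u] in exactly [min k (indeg u)] arborescences.  Being
   tau-respecting is only maintained for consecutive arcs, which suffices. *)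

Section GreedyAssignment.
Variables (T X Y : finType) (w : X -> nat) (t : Y -> nat) (O : T -> {set X}).

(* Agent [j] must receive an item [y] with [t y <= w x] for every [x] in [O j]. *)
Definition demand_le_supply (D : {set T}) (S : {set Y}) := forall i,
  #|[set j in D | [exists x in O j, w x <= i]]| <= #|[set y in S | t y <= i]|.

Definition timely_assignment (D : {set T}) (S : {set Y}) (g : T -> option Y) :=
  [/\ forall j, j \notin D -> g j = None,
      forall j y, g j = Some y -> y \in S,
      forall j1 j2 y, g j1 = Some y -> g j2 = Some y -> j1 = j2,
      forall j x, j \in D -> x \in O j -> exists2 y, g j = Some y & t y <= w x &
      #|[set j | g j != None]| = minn #|D| #|S| ].

Lemma demand_le_supply_set0 D : demand_le_supply D set0 ->
  forall j x, j \in D -> x \in O j -> False.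
Proof.
move=> hc j x jD xO; have := hc (w x).
rewrite (_ : [set y in set0 | _] = set0); last by apply/setP => y; rewrite !inE.
rewrite cards0 leqn0 cards_eq0 => /eqP /setP /(_ j).
by rewrite !inE jD => /existsP; apply; exists x; rewrite xO leqnn.
Qed.

Lemma timely_assignment_none D S : demand_le_supply D S ->
  (S = set0 \/ D = set0) -> timely_assignment D S (fun=> None).
Proof.
move=> hc hS0; split => //.
- move=> j x jD xO; case: hS0 => e; last by rewrite e inE in jD.
  by move: hc; rewrite e => /demand_le_supply_set0 /(_ j x jD xO) [].
- rewrite (_ : [set j | _] = set0); last by apply/setP => j; rewrite !inE.
  by case: hS0 => ->; rewrite !cards0 ?minn0 ?min0n.
Qed.

Lemma exists_most_urgent D : D != set0 -> exists2 j0, j0 \in D &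
  forall j x, j \in D -> x \in O j -> exists2 x0, x0 \in O j0 & w x0 <= w x.
Proof.
move=> /set0Pn [j1 j1D].
case: (pickP [pred p : T * X | (p.1 \in D) && (p.2 \in O p.1)]) => [p0 Hp0 | none].
  case: (arg_minnP (fun p : T * X => w p.2) Hp0) => p /andP [pD pO] pmin.
  exists p.1 => // j x jD xO; exists p.2 => //.
  by apply: (pmin (j, x)); rewrite /= jD xO.
by exists j1 => // j x jD xO; have := none (j, x); rewrite /= jD xO.
Qed.

Section RemoveFirst.
Variables (D : {set T}) (S : {set Y}) (j0 : T) (a0 : Y).
Hypotheses (hc : demand_le_supply D S) (j0D : j0 \in D) (a0S : a0 \in S).
Hypothesis j0_urgent : forall j x, j \in D -> x \in O j ->
  exists2 x0, x0 \in O j0 & w x0 <= w x.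
Hypothesis a0_earliest : forall y, y \in S -> t a0 <= t y.

Lemma earliest_item_timely x : x \in O j0 -> t a0 <= w x.
Proof.
move=> xO; have := hc (w x).
rewrite (cardsD1 j0) inE j0D /=.
have -> /= : [exists x' in O j0, w x' <= w x] by apply/existsP; exists x; rewrite xO leqnn.
case: (set_0Vmem [set y in S | t y <= w x]) => [-> | [y]]; first by rewrite cards0.
by rewrite inE => /andP [yS ty] _; apply: leq_trans (a0_earliest yS) ty.
Qed.

Lemma demand_le_supply_setD1 : demand_le_supply (D :\ j0) (S :\ a0).
Proof.
move=> i.
case: (set_0Vmem [set j in D :\ j0 | [exists x in O j, w x <= i]]) =>
     [-> | [j]]; first by rewrite cards0.
rewrite !inE => /andP [/andP [_ jD] /existsP [x /andP [xO xi]]].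
have [x0 x0O x0x] := j0_urgent jD xO.
rewrite (_ : [set j in D :\ j0 | _] = [set j in D | [exists x in O j, w x <= i]] :\ j0);
  last by apply/setP => j'; rewrite !inE andbA.
rewrite (_ : [set y in S :\ a0 | _] = [set y in S | t y <= i] :\ a0);
  last by apply/setP => y'; rewrite !inE andbA.
have := hc i; rewrite (cardsD1 j0 [set j in D | _]) (cardsD1 a0 [set y in S | _]).
have -> : j0 \in [set j in D | [exists x in O j, w x <= i]].
  by rewrite inE j0D; apply/existsP; exists x0; rewrite x0O (leq_trans x0x).
have -> : a0 \in [set y in S | t y <= i].
  by rewrite inE a0S (leq_trans (earliest_item_timely x0O)) // (leq_trans x0x).
by rewrite !add1n ltnS.
Qed.

Lemma timely_assignment_extend g : timely_assignment (D :\ j0) (S :\ a0) g ->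
  timely_assignment D S (fun j => if j == j0 then Some a0 else g j).
Proof.
case=> g1 g2 g3 g4 g5; split.
- move=> j jD; have -> : (j == j0) = false by apply/eqP => e; rewrite e j0D in jD.
  by apply: g1; rewrite inE negb_and jD orbT.
- move=> j y; case: eqP => _; first by case=> <-.
  by move/g2; rewrite inE => /andP [].
- move=> j1 j2 y; case: eqP => [-> | n1]; case: eqP => [-> | n2] //.
  + by case=> <- /g2; rewrite !inE eqxx.
  + by move=> /g2 + [e]; rewrite -e !inE eqxx.
  + exact: g3.
- move=> j x jD xO; case: eqP => [e | ne].
    by exists a0 => //; apply: earliest_item_timely; rewrite -e.
  by apply: g4 => //; rewrite !inE jD andbT; apply/eqP.
- rewrite (_ : [set j | _] = j0 |: [set j | g j != None]); last first.
    by apply/setP => j; rewrite !inE; case: (j == j0).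
  rewrite cardsU1 g5 inE g1 ?inE ?eqxx //.
  by rewrite (cardsD1 j0 D) (cardsD1 a0 S) j0D a0S !add1n minnSS.
Qed.

End RemoveFirst.

(* Greedy: the most urgent agent receives the earliest item. *)
Lemma timely_assignment_exists D S : demand_le_supply D S ->
  exists g, timely_assignment D S g.
Proof.
have [n] := ubnP #|S|; elim: n D S => // n IH D S hS hc.
have [S0|Sn] := eqVneq S set0.
  by exists (fun=> None); apply: timely_assignment_none hc (or_introl S0).
have [D0|Dn] := eqVneq D set0.
  by exists (fun=> None); apply: timely_assignment_none hc (or_intror D0).
have [j0 j0D j0_urgent] := exists_most_urgent Dn.
have [y0 y0S] := set0Pn _ Sn.
case: (arg_minnP t y0S) => a0 a0S' a0_earliest.
have a0S : a0 \in S := a0S'.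
have hS' : #|S :\ a0| < n by move: hS; rewrite (cardsD1 a0) a0S add1n ltnS.
have [g gA] := IH _ _ hS' (demand_le_supply_setD1 hc j0D a0S j0_urgent a0_earliest).
by eexists; exact: timely_assignment_extend gA.
Qed.

End GreedyAssignment.

Section Walks.
Variables (W Ar : finType) (tl hd : Ar -> W).

Lemma walk_cat x p q y :
  walk tl hd x (p ++ q) y =
  walk tl hd x p (last x (map hd p)) && walk tl hd (last x (map hd p)) q y.
Proof.
elim: p x => [|a p IH] x /=; first by rewrite eqxx.
by rewrite IH andbA.
Qed.

Lemma walk_last x p y : walk tl hd x p y -> y = last x (map hd p).
Proof.
elim: p x => [|a p IH] x /=; first by move/eqP.
by case/andP => _ /IH.
Qed.

Lemma acyclic_walk_uniq x p y :
  acyclic tl hd [set: Ar] -> walk tl hd x p y -> uniq p.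
Proof.
move=> ac; elim: p x => [|a p IH] x //= /andP [/eqP ta wk].
rewrite (IH _ wk) andbT; apply/negP => ap.
case/splitPr: ap wk => p1 p2.
rewrite walk_cat /= => /andP [w1 /andP [/eqP e _]].
apply: ac; exists (tl a), (a :: p1); split => //.
  by apply/allP => b _; rewrite /= inE.
by rewrite /= eqxx e.
Qed.

Lemma sorted_walk (tau : Ar -> nat) (B : {set Ar}) x p y :
  (forall a b, a \in B -> b \in B -> hd a = tl b -> tau a <= tau b) ->
  all (mem B) p -> walk tl hd x p y -> sorted leq (map tau p).
Proof.
move=> mono; elim: p x => [|a p IH] x //.
case: p IH => [|b p] IH //= /andP [aB /andP [bB Bp]] /andP [_ /andP [/eqP tb wk]].
rewrite mono ?tb //=; apply: (IH (hd a)); first by rewrite /= bB Bp.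
by rewrite /= tb eqxx.
Qed.

(* Walk backwards along arcs not leaving [s]; acyclicity bounds the length. *)
Lemma exists_source_fed_vertex (s : W) :
  acyclic tl hd [set: Ar] -> (exists a, tl a != s) ->
  exists u a0, [/\ u != s, tl a0 = u & forall a, hd a = u -> tl a = s].
Proof.
move=> ac [a1 ha1].
suff: forall p a y, walk tl hd (tl a) (a :: p) y ->
    all (fun b => tl b != s) (a :: p) ->
    exists u a0, [/\ u != s, tl a0 = u & forall a, hd a = u -> tl a = s].
  by move/(_ [::] a1 (hd a1)); apply; rewrite /= ?eqxx ?ha1.
move=> p; have [n] := ubnP (#|Ar| - size p); elim: n p => // n IH p hn a y wk nos.
case: (pickP [pred b | (hd b == tl a) && (tl b != s)]) => [b /andP [/eqP hb tb] | none].
  have wk' : walk tl hd (tl b) (b :: a :: p) y by rewrite /= eqxx hb.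
  have hsize : size (b :: a :: p) <= #|Ar|.
    by rewrite -(card_uniqP (acyclic_walk_uniq ac wk')) max_card.
  by apply: (IH (a :: p) _ b y wk'); rewrite /= ?tb //; move: hsize hn => /=; lia.
exists (tl a), a; split => //; first by case/andP: nos.
by move=> b hb; apply/eqP; have := none b; rewrite /= hb eqxx /= => /negbFE.
Qed.

End Walks.

Lemma leq_card_nonempty_disjoint (I X : finType) (F : I -> {set X}) (E : {set X}) :
  (forall j1 j2, j1 != j2 -> [disjoint F j1 & F j2]) -> (forall j, F j \subset E) ->
  #|[set j | F j != set0]| <= #|E|.
Proof.
move=> dj sub; pose f j := [pick x in F j].
have f_inj : {in [set j | F j != set0] &, injective f}.
  move=> j1 j2; rewrite !inE /f => /set0Pn [x1 x1F] /set0Pn [x2 x2F].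
  case: pickP => [y1 y1F | /(_ x1)]; last by rewrite x1F.
  case: pickP => [y2 y2F | /(_ x2)]; last by rewrite x2F.
  move=> [e]; apply/eqP; apply/negPn/negP => ne.
  by move: (disjointFr (dj _ _ ne) y1F); rewrite e y2F.
rewrite -(card_in_imset f_inj) -(card_imset E (@Some_inj _)).
apply: subset_leq_card; apply/subsetP => o /imsetP [j]; rewrite inE => /set0Pn [x xF] ->.
rewrite /f; case: pickP => [y yF | /(_ x)]; last by rewrite xF.
by rewrite imset_f // (subsetP (sub j)).
Qed.

Section Packing.
Variables (W Ar : finType) (hd : Ar -> W) (tau : Ar -> nat) (s : W) (k : nat).
Hypothesis no_enter_s : forall a, hd a != s.

Definition packing_condition (tl : Ar -> W) := forall i v, v != s ->
  minn k #|delta tl tau i v| <= minn k #|rho hd tau i v|.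

Definition locally_respecting_arborescence (tl : Ar -> W) (Vs : {set W}) (B : {set Ar}) :=
  [/\ s \notin Vs,
      forall a, a \in B -> (tl a \in s |: Vs) /\ (hd a \in s |: Vs),
      forall v, v \in Vs -> #|[set a in B | hd a == v]| = 1 &
      forall a b, a \in B -> b \in B -> hd a = tl b -> tau a <= tau b].

Definition arborescence_packing (tl : Ar -> W)
    (Vs : 'I_k -> {set W}) (B : 'I_k -> {set Ar}) :=
  [/\ forall j, locally_respecting_arborescence tl (Vs j) (B j),
      forall j1 j2, j1 != j2 -> [disjoint B j1 & B j2] &
      forall v, v != s -> #|[set j | v \in Vs j]| = minn k (indeg hd v)].

Lemma arborescence_packing_star tl : (forall a, tl a = s) ->
  exists Vs B, arborescence_packing tl Vs B.
Proof.
move=> tls.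
have /fin_all_exists [G GA] : forall v, exists g : 'I_k -> option Ar,
    timely_assignment tau tau (fun=> set0) setT [set a | hd a == v] g.
  move=> v; apply: timely_assignment_exists => i.
  rewrite (_ : [set j in setT | _] = set0) ?cards0 //.
  by apply/setP => j; rewrite !inE; apply/existsP => -[x]; rewrite inE.
exists (fun j => [set v | (v != s) && (G v j != None)]),
       (fun j => [set a | G (hd a) j == Some a]); split.
- move=> j; split.
  + by rewrite inE eqxx.
  + move=> a; rewrite inE => /eqP e; rewrite !inE tls eqxx; split => //.
    by rewrite (negbTE (no_enter_s a)) /= e.
  + move=> v; rewrite inE => /andP [vs]; case e: (G v j) => [a|] // _.
    have [_ G_range _ _ _] := GA v.
    have := G_range _ _ e; rewrite inE => /eqP ha.
    rewrite (_ : [set b in _ | hd b == v] = [set a]) ?cards1 //.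
    apply/setP => b; rewrite !inE; apply/idP/idP.
      by case/andP => /eqP + /eqP hb; rewrite hb e => -[->].
    by move/eqP => ->; rewrite ha e !eqxx.
  + by move=> a b _ _; rewrite tls => e; move: (no_enter_s a); rewrite e eqxx.
- move=> j1 j2 ne; apply/pred0P => a /=; apply/negbTE/andP; rewrite !inE => -[/eqP e1 /eqP e2].
  have [_ _ G_inj _ _] := GA (hd a).
  by move: ne; rewrite (G_inj _ _ _ e1 e2) eqxx.
- move=> v vs; have [_ _ _ _ G_card] := GA v.
  move: G_card; rewrite cardsT card_ord => <-.
  by apply: eq_card => j; rewrite !inE vs.
Qed.

Definition redirect (tl : Ar -> W) (u : W) (a : Ar) : W :=
  if tl a == u then s else tl a.

Section Redirect.
Variables (tl : Ar -> W) (u : W).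

Lemma redirect_id a : redirect tl u a != s -> redirect tl u a = tl a.
Proof. by rewrite /redirect; case: (tl a == u); rewrite ?eqxx. Qed.

Lemma redirect_other a : tl a != u -> redirect tl u a = tl a.
Proof. by rewrite /redirect => /negbTE ->. Qed.

Lemma redirect_acyclic :
  acyclic tl hd [set: Ar] -> acyclic (redirect tl u) hd [set: Ar].
Proof.
move=> ac [x [p [pn Bp wk]]]; apply: ac; exists x, p; split => //.
have xs : x != s.
  case: p pn wk {Bp} => [|a p] // _ /walk_last -> /=.
  have := mem_last (hd a) (map hd p); rewrite -map_cons => /mapP [b _ ->].
  exact: no_enter_s.
have walk_from z q : z != s -> walk (redirect tl u) hd z q x -> walk tl hd z q x.
  elim: q z => [|a q IH] z zs //= /andP [/eqP e wkq].
  have ta : tl a = z by move: e; rewrite /redirect; case: ifP => // _ sz; rewrite sz eqxx in zs.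
  by rewrite ta eqxx (IH _ (no_enter_s a) wkq).
exact: walk_from.
Qed.

Lemma redirect_packing_condition :
  packing_condition tl -> packing_condition (redirect tl u).
Proof.
move=> cd i v vs; apply: leq_trans (cd i v vs); rewrite leq_min geq_minl /=.
apply: leq_trans (geq_minr _ _) (subset_leq_card _); apply/subsetP => a.
by rewrite !inE => /andP [/eqP e ->]; rewrite -redirect_id e ?eqxx.
Qed.

Lemma card_redirect_lt a0 : u != s -> tl a0 = u ->
  #|[set a | redirect tl u a != s]| < #|[set a | tl a != s]|.
Proof.
move=> us ta0; rewrite (cardsD1 a0 [set a | tl a != s]) inE ta0 us add1n ltnS.
apply: subset_leq_card; apply/subsetP => a; rewrite !inE => h.
rewrite -redirect_id // h andbT; apply: contraNneq h => ->.
by rewrite /redirect ta0 eqxx.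
Qed.

End Redirect.

Section Lift.
Variables (tl : Ar -> W) (u : W).
Hypotheses (us : u != s) (fed_by_s : forall a, hd a = u -> tl a = s).
Variables (Vs' : 'I_k -> {set W}) (B' : 'I_k -> {set Ar}).
Hypothesis packing' : arborescence_packing (redirect tl u) Vs' B'.

(* Arborescence [j] must regain [u] through an arc [s -> u] no later than its
   arcs leaving [u]; the in-arcs of [u] are the items to distribute. *)
Let demand j := [set a in B' j | tl a == u].
Let supply := [set a | hd a == u].

Lemma lift_demand_le_supply : packing_condition tl ->
  demand_le_supply tau tau demand setT supply.
Proof.
move=> cd i; have [_ dj _] := packing'.
set A := [set j in setT | _].
have -> : A = [set j | [set a in demand j | tau a <= i] != set0].
  apply/setP => j; rewrite !inE; apply/existsP/set0Pn => -[a].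
    by case/andP => aO ai; exists a; rewrite inE aO.
  by rewrite inE => /andP [aO ai]; exists a; rewrite aO.
have leq_delta : #|[set j | [set a in demand j | tau a <= i] != set0]| <= #|delta tl tau i u|.
  apply: leq_card_nonempty_disjoint => [j1 j2 ne | j].
    apply/pred0P => a /=; apply/negbTE/andP; rewrite !inE => -[/andP [/andP [a1 _] _]].
    by move=> /andP [/andP [a2 _] _]; move: (disjointFr (dj _ _ ne) a1); rewrite a2.
  by apply/subsetP => a; rewrite !inE => /andP [/andP [_ ->] ->].
have leq_k : #|[set j | [set a in demand j | tau a <= i] != set0]| <= k.
  by apply: leq_trans (max_card _) _; rewrite card_ord.
rewrite (_ : [set y in supply | tau y <= i] = rho hd tau i u); last first.
  by apply/setP => y; rewrite !inE.
have := cd i u us; rewrite leq_min => /andP [_ /(leq_trans _)]; apply.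
by rewrite leq_min leq_k leq_delta.
Qed.

Variable g : 'I_k -> option Ar.
Hypothesis assigned : timely_assignment tau tau demand setT supply g.

Definition lift_vertices j :=
  [set v | ((v \in Vs' j) && (v != u)) || ((v == u) && (g j != None))].
Definition lift_arcs j :=
  [set a | ((a \in B' j) && (hd a != u)) || (g j == Some a)].

Lemma assigned_arc j y : g j = Some y -> hd y = u /\ tl y = s.
Proof.
have [_ g_range _ _ _] := assigned.
by move/g_range; rewrite inE => /eqP h; split => //; apply: fed_by_s.
Qed.

Lemma lift_arborescence j :
  locally_respecting_arborescence tl (lift_vertices j) (lift_arcs j).
Proof.
have [packed _ _] := packing'; have [s_out ends indeg1 mono] := packed j.
have [_ _ _ g_timely _] := assigned.
split.
- by rewrite !inE (negbTE s_out) /= eq_sym (negbTE us).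
- move=> a; rewrite !inE => /orP [/andP [aB hu] | /eqP ga]; last first.
    by have [-> ->] := assigned_arc ga; rewrite !eqxx ga /= !orbT.
  have [tt ht] := ends a aB; split; last first.
    by move: ht; rewrite !inE hu andbT => /orP [-> | ->]; rewrite ?orbT.
  have [tu | tu] := eqVneq (tl a) u.
    have aO : a \in demand j by rewrite inE aB tu eqxx.
    by have [y -> _] := g_timely j a (in_setT j) aO; rewrite !orbT.
  by move: tt; rewrite (redirect_other tu) !inE /= andbT orbF.
- move=> v; rewrite !inE => /orP [/andP [vV vu] | /andP [/eqP -> gn]].
    rewrite -(indeg1 v vV); apply: eq_card => a; rewrite !inE.
    have [hv | ] := eqVneq (hd a) v; rewrite ?andbF // !andbT hv vu andbT.
    case e: (g j == Some a); last by rewrite orbF.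
    by have [hu _] := assigned_arc (eqP e); move: vu; rewrite -hv hu eqxx.
  case e: (g j) gn => [y|] // _.
  rewrite -(cards1 y); apply: eq_card => a; rewrite !inE.
  have [hu | hu] := eqVneq (hd a) u; first by rewrite e andbF andbT /= eq_sym.
  by rewrite andbF; apply/esym/eqP => ay; move: hu; rewrite ay (assigned_arc e).1 eqxx.
- move=> a b; rewrite !inE => /orP [/andP [aB ha] | /eqP ga] /orP [/andP [bB hb] | /eqP gb] e.
  + by apply: mono => //; rewrite redirect_other -?e.
  + by move: (no_enter_s a); rewrite e (assigned_arc gb).2 eqxx.
  + have bO : b \in demand j by rewrite inE bB -e (assigned_arc ga).1 eqxx.
    by have [y + ty] := g_timely j b (in_setT j) bO; rewrite ga => -[->].
  + by move: (no_enter_s a); rewrite e (assigned_arc gb).2 eqxx.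
Qed.

Lemma lift_disjoint j1 j2 : j1 != j2 -> [disjoint lift_arcs j1 & lift_arcs j2].
Proof.
move=> ne; have [_ dj _] := packing'; have [_ _ g_inj _ _] := assigned.
apply/pred0P => a /=; apply/negbTE/andP; rewrite !inE.
case=> /orP [/andP [aB1 ha1] | /eqP ga1] /orP [/andP [aB2 ha2] | /eqP ga2].
- by move: (disjointFr (dj _ _ ne) aB1); rewrite aB2.
- by rewrite (assigned_arc ga2).1 eqxx in ha1.
- by rewrite (assigned_arc ga1).1 eqxx in ha2.
- by move: ne; rewrite (g_inj _ _ _ ga1 ga2) eqxx.
Qed.

Lemma lift_count v : v != s ->
  #|[set j | v \in lift_vertices j]| = minn k (indeg hd v).
Proof.
move=> vs; have [_ _ count'] := packing'; have [_ _ _ _ g_card] := assigned.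
have [-> | vu] := eqVneq v u.
  move: g_card; rewrite cardsT card_ord => <-.
  by apply: eq_card => j; rewrite !inE eqxx andbF.
rewrite -(count' v vs); apply: eq_card => j.
by rewrite !inE vu andbT (negbTE vu) /= orbF.
Qed.

End Lift.

Lemma arborescence_packing_exists tl : acyclic tl hd [set: Ar] ->
  packing_condition tl -> exists Vs B, arborescence_packing tl Vs B.
Proof.
have [n] := ubnP #|[set a | tl a != s]|; elim: n tl => // n IH tl hn ac cd.
have [a1 ha1 | star] := pickP (fun a => tl a != s); last first.
  by apply: arborescence_packing_star => a; apply/eqP/negbFE/star.
have [u [a0 [us ta0 fed]]] := exists_source_fed_vertex ac (ex_intro _ a1 ha1).
have [Vs' [B' packing']] := IH (redirect tl u)
  (leq_trans (card_redirect_lt us ta0) hn) (redirect_acyclic ac) (redirect_packing_condition u cd).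
have [g assigned] := timely_assignment_exists (lift_demand_le_supply us packing' cd).
exists (lift_vertices u Vs' g), (lift_arcs u B' g); split.
- exact: (lift_arborescence us fed packing' assigned).
- exact: (lift_disjoint fed packing' assigned).
- exact: (lift_count packing' assigned).
Qed.

End Packing.

Lemma locally_respecting_tau_resp (W Ar : finType) (tl hd : Ar -> W) (tau : Ar -> nat)
    (s : W) (Vs : {set W}) (B : {set Ar}) :
  acyclic tl hd [set: Ar] -> locally_respecting_arborescence hd tau s tl Vs B ->
  tau_resp_arborescence tl hd tau s Vs B.
Proof.
move=> ac [s_out ends indeg1 mono]; split; first split => //.
  move=> [x [p [pn _ wk]]]; apply: ac; exists x, p; split => //.
  by apply/allP => a _; rewrite inE.
by move=> v p _ Bp /andP [wk _]; apply: sorted_walk mono Bp wk.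
Qed.

Theorem theorem2 (W Ar : finType) (tl hd : Ar -> W) (tau : Ar -> nat) (s : W)
  (k : nat)
  (no_enter_s : forall a : Ar, hd a != s)
  (acyc : acyclic tl hd [set: Ar])
  (cond : forall (i : nat) (v : W), v != s ->
     minn k #|rho hd tau i v| >= minn k #|delta tl tau i v|) :
  exists (Vs : 'I_k -> {set W}) (B : 'I_k -> {set Ar}),
    [/\ (forall j, tau_resp_arborescence tl hd tau s (Vs j) (B j)),
        (forall j1 j2, j1 != j2 -> [disjoint B j1 & B j2]) &
        (forall v, v != s -> #|[set j | v \in Vs j]| = minn k (indeg hd v))].
Proof.
have [Vs [B [packed disjoint_arcs count]]] := arborescence_packing_exists no_enter_s acyc cond.
exists Vs, B; split => // j.
exact: locally_respecting_tau_resp acyc (packed j).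
Qed.
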